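(* Let $k$ be a field of characteristic $\neq 2$, $\mathcal A=k[t,t^{-1},(1-t)^{-1}]$, $t'=1-t^{-1}$, $t''=(1-t)^{-1}$, $\mathfrak g=\mathfrak{sl}_2(k)\otimes_k\mathcal A$, and let $\tau_1,\tau_2$ and $u_0,u_1,u_2$ be as in the context. Define $\mathfrak t=\{g\in\mathfrak g:\tau_1(g)=g,\ \tau_2(g)=g\}$, $\mathfrak g_0=\{g:\tau_1(g)=g,\ \tau_2(g)=-g\}$, $\mathfrak g_1=\{g:\tau_1(g)=-g,\ \tau_2(g)=g\}$, $\mathfrak g_2=\{g:\tau_1(g)=-g,\ \tau_2(g)=-g\}$. Then $\mathfrak t=0$, $\mathfrak g_0=u_0\mathcal A$, $\mathfrak g_1=u_1\mathcal A$ and $\mathfrak g_2=u_2\mathcal A$.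
   Context: Let $x=\begin{pmatrix}-1&2\\0&1\end{pmatrix}$, $y=\begin{pmatrix}-1&0\\-2&1\end{pmatrix}$, $z=\begin{pmatrix}1&0\\0&-1\end{pmatrix}$. $\tau_1$ is the $\mathcal A$-linear map of $\mathfrak g$ with $\tau_1(x\otimes 1)=-x\otimes 1$, $\tau_1(y\otimes 1)=-(z\otimes t'+x\otimes(t'-1))$, $\tau_1(z\otimes 1)=x\otimes t''+y\otimes(t''-1)$; $\tau_2$ is the $\mathcal A$-linear map with $\tau_2(x\otimes 1)=y\otimes t+z\otimes(t-1)$, $\tau_2(y\otimes 1)=-y\otimes 1$, $\tau_2(z\otimes 1)=-(x\otimes t''+y\otimes(t''-1))$. (These are commuting Lie algebra automorphisms of order $2$, corresponding to the permutations $(12)(30)$ and $(23)(10)$ of the $S_4$-action on the Tetrahedron algebra transported to $\mathfrak g$.) Also $u_0=\tfrac14(z\otimes 1+x\otimes t''+y\otimes(t''-1))$, $u_1=\tfrac14(x\otimes 1+y\otimes t+z\otimes(t-1))$, $u_2=\tfrac14(y\otimes 1+z\otimes t'+x\otimes(t'-1))$. *)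

From HB Require Import structures.
From mathcomp Require Import all_boot all_order all_algebra.
Set Implicit Arguments. Unset Strict Implicit. Unset Printing Implicit Defensive.
Import Order.TTheory GRing.Theory Num.Theory.
Local Open Scope ring_scope.

Section Tetra.
Variable k : fieldType.

(* ambient field of rational functions k(t); A is realized inside it *)
Definition Kt := {fraction {poly k}}.
Definition polyF (p : {poly k}) : Kt := FracField.tofrac p.
Definition tt : Kt := polyF 'X.

(* A = k[t, t^-1, (1-t)^-1] as a subset of k(t) *)
Definition inA (f : Kt) : Prop :=
  exists (p : {poly k}) (a b : nat), f = polyF p / (tt ^+ a * (1 - tt) ^+ b).

Definition t' : Kt := 1 - tt^-1.
Definition t'' : Kt := (1 - tt)^-1.

Definition mx2 (a b c d : Kt) : 'M[Kt]_2 :=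
  \matrix_(i < 2, j < 2)
    if (i == 0%N :> nat) then (if (j == 0%N :> nat) then a else b)
    else (if (j == 0%N :> nat) then c else d).

Definition xm : 'M[Kt]_2 := mx2 (-1) 2 0 1.
Definition ym : 'M[Kt]_2 := mx2 (-1) 0 (-2) 1.
Definition zm : 'M[Kt]_2 := mx2 1 0 0 (-1).

(* g = sl_2(k) (x) A, realized as traceless 2x2 matrices with entries in A *)
Definition in_g (g : 'M[Kt]_2) : Prop := (forall i j, inA (g i j)) /\ \tr g = 0.

(* coordinates of a traceless matrix in the basis x, y, z:
   a x + b y + c z = [[-a-b+c, 2a], [-2b, a+b-c]] *)
Definition coa (g : 'M[Kt]_2) : Kt := g 0 1 / 2.
Definition cob (g : 'M[Kt]_2) : Kt := - (g 1 0) / 2.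
Definition coc (g : 'M[Kt]_2) : Kt := g 0 0 + coa g + cob g.

(* the A-linear maps determined by their values on x(x)1, y(x)1, z(x)1 *)
Definition tau1 (g : 'M[Kt]_2) : 'M[Kt]_2 :=
  coa g *: (- xm)
  + cob g *: (- (t' *: zm + (t' - 1) *: xm))
  + coc g *: (t'' *: xm + (t'' - 1) *: ym).

Definition tau2 (g : 'M[Kt]_2) : 'M[Kt]_2 :=
  coa g *: (tt *: ym + (tt - 1) *: zm)
  + cob g *: (- ym)
  + coc g *: (- (t'' *: xm + (t'' - 1) *: ym)).

Definition u0 : 'M[Kt]_2 := 4^-1 *: (zm + t'' *: xm + (t'' - 1) *: ym).
Definition u1 : 'M[Kt]_2 := 4^-1 *: (xm + tt *: ym + (tt - 1) *: zm).
Definition u2 : 'M[Kt]_2 := 4^-1 *: (ym + t' *: zm + (t' - 1) *: xm).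

End Tetra.

(* In the basis x, y, z, a traceless matrix over k(t) has coordinates
   (coa, cob, coc), and tau1, tau2 act on coordinates by explicit linear maps
   with coefficients in k[t, t^-1, (1-t)^-1].  For each sign pattern, the two
   eigenvector equations form a linear system that can be solved over any
   field in which t and 1 - t are invertible: the joint fixed points vanish
   (this needs 2 != 0), and otherwise the coordinate vector is a multiple of
   that of 4 u_i, the multiplier being one of its coordinates.  As 2 is a unit
   of A, the coordinates of an element of g lie in A; conversely g is an
   A-module containing x, y and z, so it contains every A-multiple of u_i. *)

From HB Require Import structures.
From mathcomp Require Import all_boot all_order all_algebra ring.
Import GRing.Theory.
Local Open Scope ring_scope.
Set Implicit Arguments. Unset Strict Implicit.

Lemma matrix2P (R : Type) (A B : 'M[R]_2) :
  A 0 0 = B 0 0 -> A 0 1 = B 0 1 -> A 1 0 = B 1 0 -> A 1 1 = B 1 1 -> A = B.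
Proof.
have ord2 (i : 'I_2) : i = 0 \/ i = 1.
  by case: i => [[|[|//]] ?]; [left | right]; apply/val_inj.
move=> e00 e01 e10 e11; apply/matrixP => i j.
by case: (ord2 i) => ->; case: (ord2 j) => ->.
Qed.

Lemma mxtrace2 (R : nmodType) (A : 'M[R]_2) : \tr A = A 0 0 + A 1 1.
Proof. by rewrite /mxtrace big_ord_recl big_ord1; congr (_ + A _ _); apply: val_inj. Qed.

Section CoordinateInvolutions.
Variables (F : fieldType) (r r' r'' : F).

Definition tau1_xyz (a b c : F) : F * F * F :=
  (- a - (r' - 1) * b + r'' * c, (r'' - 1) * c, - (r' * b)).
Definition tau2_xyz (a b c : F) : F * F * F :=
  (- (r'' * c), r * a - b - (r'' - 1) * c, (r - 1) * a).

Hypotheses (char_F_neq2 : 2 != 0 :> F) (r_neq0 : r != 0) (onem_r_neq0 : 1 - r != 0).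
Hypotheses (r'E : r' = 1 - r^-1) (r''E : r'' = (1 - r)^-1).

Lemma tau_xyz_u0 :
  tau1_xyz r'' (r'' - 1) 1 = (r'', r'' - 1, 1) /\
  tau2_xyz r'' (r'' - 1) 1 = (- r'', - (r'' - 1), - 1).
Proof.
by rewrite /tau1_xyz /tau2_xyz r'E r''E; split; congr (_, _, _); field;
  rewrite ?r_neq0 ?onem_r_neq0.
Qed.

Lemma tau_xyz_u1 :
  tau1_xyz 1 r (r - 1) = (- 1, - r, - (r - 1)) /\
  tau2_xyz 1 r (r - 1) = (1, r, r - 1).
Proof.
by rewrite /tau1_xyz /tau2_xyz r'E r''E; split; congr (_, _, _); field;
  rewrite ?r_neq0 ?onem_r_neq0.
Qed.

Lemma tau_xyz_u2 :
  tau1_xyz (r' - 1) 1 r' = (- (r' - 1), - 1, - r') /\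
  tau2_xyz (r' - 1) 1 r' = (- (r' - 1), - 1, - r').
Proof.
by rewrite /tau1_xyz /tau2_xyz r'E r''E; split; congr (_, _, _); field;
  rewrite ?r_neq0 ?onem_r_neq0.
Qed.

Lemma tau_xyz_fixed_fixed a b c :
  tau1_xyz a b c = (a, b, c) -> tau2_xyz a b c = (a, b, c) -> (a, b, c) = (0, 0, 0).
Proof.
case=> E1 E2 _ [F1 _ _].
have c0 : c = 0.
  (* eliminating a and b from the first coordinate of tau1 leaves 4 r'' c = 0 *)
  have : 4 * r'' * c = 0.
    rewrite -(subrr a) -{1}E1 -F1 -E2 r'E r''E.
    by field; rewrite ?r_neq0 ?onem_r_neq0.
  have four_neq0 : 4 != 0 :> F by rewrite (_ : 4 = 2 * 2) ?mulf_neq0 //; ring.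
  by move/eqP; rewrite !mulf_eq0 (negbTE four_neq0) r''E invr_eq0 (negbTE onem_r_neq0) => /eqP.
by rewrite -F1 -E2 c0 !mulr0 oppr0.
Qed.

Lemma tau_xyz_fixed_neg a b c :
  tau1_xyz a b c = (a, b, c) -> tau2_xyz a b c = (- a, - b, - c) ->
  (a, b, c) = (c * r'', c * (r'' - 1), c * 1).
Proof.
case=> _ E2 _ [/oppr_inj F1 _ _].
by rewrite -F1 -E2 mulr1 ![c * _]mulrC.
Qed.

Lemma tau_xyz_neg_fixed a b c :
  tau1_xyz a b c = (- a, - b, - c) -> tau2_xyz a b c = (a, b, c) ->
  (a, b, c) = (a * 1, a * r, a * (r - 1)).
Proof.
case=> _ E2 _ [_ _ F3].
have -> : b = a * r by rewrite -[b]opprK -E2 -F3 r''E; field; rewrite ?onem_r_neq0.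
by rewrite -F3 mulr1 [(r - 1) * a]mulrC.
Qed.

Lemma tau_xyz_neg_neg a b c :
  tau1_xyz a b c = (- a, - b, - c) -> tau2_xyz a b c = (- a, - b, - c) ->
  (a, b, c) = (b * (r' - 1), b * 1, b * r').
Proof.
case=> _ _ /oppr_inj E3 [/oppr_inj F1 _ _].
have -> : a = b * (r' - 1) by rewrite -F1 -E3 r'E r''E; field; rewrite ?r_neq0 ?onem_r_neq0.
by rewrite -E3 mulr1 [r' * b]mulrC.
Qed.

End CoordinateInvolutions.

Section Tetrahedron.
Variable k : fieldType.
Hypothesis char_k_neq2 : (2%:R : k) != 0.

Local Notation K := (Kt k).
Local Notation t := (tt k).
Local Notation constK := (@FracField.tofrac _ \o polyC : k -> K).

Lemma tt_neq0 : t != 0.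
Proof. by rewrite /tt /polyF tofrac_eq0 polyX_eq0. Qed.

Lemma onem_tt_neq0 : 1 - t != 0.
Proof.
rewrite /tt /polyF -tofrac1 -tofracB tofrac_eq0 subr_eq0.
by apply/eqP => /(congr1 (size : {poly k} -> nat)); rewrite size_polyX size_poly1.
Qed.

Let t'E : t' k = 1 - t^-1 := erefl.
Let t''E : t'' k = (1 - t)^-1 := erefl.

Lemma two_neq0 : 2 != 0 :> K.
Proof. by rewrite -(rmorph_nat constK) fmorph_eq0. Qed.

Lemma four_neq0 : 4 != 0 :> K.
Proof. by rewrite (_ : 4 = 2 * 2) ?mulf_neq0 ?two_neq0; last ring. Qed.

Lemma inA_polyF (p : {poly k}) : inA (polyF p).
Proof. by exists p, 0%N, 0%N; rewrite !expr0 mulr1 divr1. Qed.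

Lemma inA_nat n : inA (n%:R : K).
Proof. by have := inA_polyF n%:R; rewrite /polyF rmorph_nat. Qed.

Lemma inA0 : inA (0 : K).
Proof. by have := inA_nat 0; rewrite mulr0n. Qed.

Lemma inA1 : inA (1 : K).
Proof. by have := inA_nat 1; rewrite mulr1n. Qed.

Lemma inA_tt : inA t.
Proof. exact: inA_polyF. Qed.

Lemma inA_inv_nat n : inA (n%:R : K)^-1.
Proof.
have := inA_polyF (n%:R^-1)%:P.
by rewrite /polyF -[_ (_%:P)]/(constK _) fmorphV rmorph_nat.
Qed.

Lemma inA_inv_tt : inA t^-1.
Proof. by exists 1, 1%N, 0%N; rewrite /polyF rmorph1 expr1 expr0 mulr1 div1r. Qed.

Lemma inA_opp (f : K) : inA f -> inA (- f).
Proof. by case=> p [a [b ->]]; exists (- p), a, b; rewrite /polyF rmorphN mulNr. Qed.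

Lemma mul_tt_powers a1 b1 a2 b2 :
  t ^+ a1 * (1 - t) ^+ b1 * (t ^+ a2 * (1 - t) ^+ b2) =
  t ^+ (a1 + a2) * (1 - t) ^+ (b1 + b2).
Proof. by rewrite !exprD mulrACA. Qed.

Lemma tt_powers_neq0 a b : t ^+ a * (1 - t) ^+ b != 0.
Proof. by apply: mulf_neq0; apply: expf_neq0; [exact: tt_neq0 | exact: onem_tt_neq0]. Qed.

Lemma inA_add (f g : K) : inA f -> inA g -> inA (f + g).
Proof.
case=> p1 [a1 [b1 ->]] [p2 [a2 [b2 ->]]].
exists (p1 * ('X ^+ a2 * (1 - 'X) ^+ b2) + p2 * ('X ^+ a1 * (1 - 'X) ^+ b1)).
exists (a1 + a2)%N, (b1 + b2)%N.
rewrite addf_div ?tt_powers_neq0 // mul_tt_powers.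
by rewrite /polyF rmorphD !rmorphM !rmorphXn rmorphB rmorph1.
Qed.

Lemma inA_mul (f g : K) : inA f -> inA g -> inA (f * g).
Proof.
case=> p1 [a1 [b1 ->]] [p2 [a2 [b2 ->]]].
exists (p1 * p2), (a1 + a2)%N, (b1 + b2)%N.
by rewrite mulf_div mul_tt_powers /polyF rmorphM.
Qed.

Lemma inA_sub (f g : K) : inA f -> inA g -> inA (f - g).
Proof. by move=> fA /inA_opp; apply: inA_add. Qed.

Lemma inA_t' : inA (t' k).
Proof. exact: inA_sub inA1 inA_inv_tt. Qed.

Lemma inA_t'' : inA (t'' k).
Proof. by exists 1, 0%N, 1%N; rewrite /polyF rmorph1 expr1 expr0 mul1r div1r. Qed.

Lemma mx2D (a b c d a' b' c' d' : K) :
  mx2 a b c d + mx2 a' b' c' d' = mx2 (a + a') (b + b') (c + c') (d + d').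
Proof. by apply: matrix2P; rewrite !mxE. Qed.

Lemma mx2Z s (a b c d : K) : s *: mx2 a b c d = mx2 (s * a) (s * b) (s * c) (s * d).
Proof. by apply: matrix2P; rewrite !mxE. Qed.

Lemma mx2N (a b c d : K) : - mx2 a b c d = mx2 (- a) (- b) (- c) (- d).
Proof. by apply: matrix2P; rewrite !mxE. Qed.

Lemma in_gD (g h : 'M[K]_2) : in_g g -> in_g h -> in_g (g + h).
Proof.
case=> gA trg [hA trh]; split; last by rewrite mxtraceD trg trh addr0.
by move=> i j; rewrite mxE; apply: inA_add.
Qed.

Lemma in_gZ s (g : 'M[K]_2) : inA s -> in_g g -> in_g (s *: g).
Proof.
move=> sA [gA trg]; split; last by rewrite mxtraceZ trg mulr0.
by move=> i j; rewrite mxE; apply: inA_mul.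
Qed.

Lemma in_g_mx2 (a b c d : K) :
  inA a -> inA b -> inA c -> inA d -> a + d = 0 -> in_g (mx2 a b c d).
Proof.
move=> aA bA cA dA ad0; split; last by rewrite mxtrace2 !mxE.
by move=> i j; rewrite mxE; do 2!case: ifP.
Qed.

Lemma in_g_xyz : [/\ in_g (xm k), in_g (ym k) & in_g (zm k)].
Proof.
have inA2 := inA_nat 2.
by split; apply: in_g_mx2; rewrite ?addNr ?addrN //;
  solve [exact: inA0 | exact: inA1 | exact: inA_opp inA1 | exact: inA_opp inA2].
Qed.

Lemma in_g_u0 : in_g (u0 k).
Proof.
have [gx gy gz] := in_g_xyz; apply: in_gZ (inA_inv_nat 4) _.
exact: in_gD (in_gD gz (in_gZ inA_t'' gx)) (in_gZ (inA_sub inA_t'' inA1) gy).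
Qed.

Lemma in_g_u1 : in_g (u1 k).
Proof.
have [gx gy gz] := in_g_xyz; apply: in_gZ (inA_inv_nat 4) _.
exact: in_gD (in_gD gx (in_gZ inA_tt gy)) (in_gZ (inA_sub inA_tt inA1) gz).
Qed.

Lemma in_g_u2 : in_g (u2 k).
Proof.
have [gx gy gz] := in_g_xyz; apply: in_gZ (inA_inv_nat 4) _.
exact: in_gD (in_gD gy (in_gZ inA_t' gz)) (in_gZ (inA_sub inA_t' inA1) gx).
Qed.

Lemma inA_coords (g : 'M[K]_2) :
  in_g g -> [/\ inA (coa g), inA (cob g) & inA (coc g)].
Proof.
case=> gA _; have inA_half := inA_inv_nat 2.
have coaA : inA (coa g) := inA_mul (gA 0 1) inA_half.
have cobA : inA (cob g) := inA_mul (inA_opp (gA 1 0)) inA_half.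
by split=> //; apply: inA_add (inA_add (gA 0 0) coaA) cobA.
Qed.

Definition comb_xyz (v : K * K * K) : 'M[K]_2 :=
  v.1.1 *: xm k + v.1.2 *: ym k + v.2 *: zm k.

Definition xyz_coords (g : 'M[K]_2) : K * K * K := (coa g, cob g, coc g).

Lemma comb_xyzE a b c :
  comb_xyz (a, b, c) = mx2 (- a - b + c) (2 * a) (- (2 * b)) (a + b - c).
Proof. by rewrite /comb_xyz /xm /ym /zm /= !(mx2Z, mx2D); congr mx2; ring. Qed.

Lemma comb_xyzK : cancel comb_xyz xyz_coords.
Proof.
have halfK (a : K) : 2 * a / 2 = a by rewrite mulrC mulKf ?two_neq0.
case=> [[a b] c]; rewrite /xyz_coords /coc /coa /cob comb_xyzE !mxE /= opprK !halfK.
by congr (_, _, _); ring.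
Qed.

Lemma comb_xyz_inj : injective comb_xyz.
Proof. exact: can_inj comb_xyzK. Qed.

Lemma xyz_coordsK (g : 'M[K]_2) : \tr g = 0 -> comb_xyz (xyz_coords g) = g.
Proof.
rewrite mxtrace2 => /eqP; rewrite addr_eq0 => /eqP g11E.
have halfK (a : K) : 2 * (a / 2) = a by rewrite mulrC divfK ?two_neq0.
apply: matrix2P; rewrite comb_xyzE !mxE /= /coc /coa /cob.
- by ring.
- exact: halfK.
- by rewrite halfK opprK.
- by rewrite g11E; ring.
Qed.

Lemma comb_xyz0 : comb_xyz (0, 0, 0) = 0.
Proof. by rewrite /comb_xyz /= !scale0r !addr0. Qed.

Lemma comb_xyzZ s a b c : comb_xyz (s * a, s * b, s * c) = s *: comb_xyz (a, b, c).
Proof. by rewrite /comb_xyz /= !scalerDr !scalerA. Qed.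

Lemma comb_xyzN a b c : comb_xyz (- a, - b, - c) = - comb_xyz (a, b, c).
Proof. by rewrite /comb_xyz /= !scaleNr !opprD. Qed.

Lemma coordsZ s (g : 'M[K]_2) :
  [/\ coa (s *: g) = s * coa g, cob (s *: g) = s * cob g & coc (s *: g) = s * coc g].
Proof.
have coaZ : coa (s *: g) = s * coa g by rewrite /coa mxE mulrA.
have cobZ : cob (s *: g) = s * cob g by rewrite /cob mxE mulrA mulrN.
by split; rewrite // /coc coaZ cobZ mxE -!mulrDr.
Qed.

Lemma tau1Z s (g : 'M[K]_2) : tau1 (s *: g) = s *: tau1 g.
Proof.
rewrite /tau1; have [-> -> ->] := coordsZ s g.
by rewrite [s *: (_ + _ + _)]scalerDr [s *: (_ + _)]scalerDr !scalerA.
Qed.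

Lemma tau2Z s (g : 'M[K]_2) : tau2 (s *: g) = s *: tau2 g.
Proof.
rewrite /tau2; have [-> -> ->] := coordsZ s g.
by rewrite [s *: (_ + _ + _)]scalerDr [s *: (_ + _)]scalerDr !scalerA.
Qed.

Lemma tau1_comb a b c :
  tau1 (comb_xyz (a, b, c)) = comb_xyz (tau1_xyz (t' k) (t'' k) a b c).
Proof.
rewrite /tau1; have [-> -> ->] := comb_xyzK (a, b, c).
by rewrite /comb_xyz /xm /ym /zm /= !(mx2Z, mx2N, mx2D); congr mx2; ring.
Qed.

Lemma tau2_comb a b c :
  tau2 (comb_xyz (a, b, c)) = comb_xyz (tau2_xyz t (t'' k) a b c).
Proof.
rewrite /tau2; have [-> -> ->] := comb_xyzK (a, b, c).
by rewrite /comb_xyz /xm /ym /zm /= !(mx2Z, mx2N, mx2D); congr mx2; ring.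
Qed.

Lemma comb_u0 : comb_xyz (t'' k, t'' k - 1, 1) = 4 *: u0 k.
Proof.
rewrite /u0 (scalerKV four_neq0).
by rewrite /comb_xyz /xm /ym /zm /= !(mx2Z, mx2D); congr mx2; ring.
Qed.

Lemma comb_u1 : comb_xyz (1, t, t - 1) = 4 *: u1 k.
Proof.
rewrite /u1 (scalerKV four_neq0).
by rewrite /comb_xyz /xm /ym /zm /= !(mx2Z, mx2D); congr mx2; ring.
Qed.

Lemma comb_u2 : comb_xyz (t' k - 1, 1, t' k) = 4 *: u2 k.
Proof.
rewrite /u2 (scalerKV four_neq0).
by rewrite /comb_xyz /xm /ym /zm /= !(mx2Z, mx2D); congr mx2; ring.
Qed.

Lemma scale_inv4_comb (u : 'M[K]_2) v : comb_xyz v = 4 *: u -> u = 4^-1 *: comb_xyz v.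
Proof. by move->; rewrite (scalerK four_neq0). Qed.

Lemma tau_u0 : tau1 (u0 k) = u0 k /\ tau2 (u0 k) = - u0 k.
Proof.
have [e1 e2] := tau_xyz_u0 tt_neq0 onem_tt_neq0 t'E t''E.
rewrite (scale_inv4_comb comb_u0) tau1Z tau2Z tau1_comb tau2_comb e1 e2.
by rewrite comb_xyzN scalerN.
Qed.

Lemma tau_u1 : tau1 (u1 k) = - u1 k /\ tau2 (u1 k) = u1 k.
Proof.
have [e1 e2] := tau_xyz_u1 tt_neq0 onem_tt_neq0 t'E t''E.
rewrite (scale_inv4_comb comb_u1) tau1Z tau2Z tau1_comb tau2_comb e1 e2.
by rewrite comb_xyzN scalerN.
Qed.

Lemma tau_u2 : tau1 (u2 k) = - u2 k /\ tau2 (u2 k) = - u2 k.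
Proof.
have [e1 e2] := tau_xyz_u2 tt_neq0 onem_tt_neq0 t'E t''E.
rewrite (scale_inv4_comb comb_u2) tau1Z tau2Z tau1_comb tau2_comb e1 e2.
by rewrite comb_xyzN scalerN.
Qed.

Lemma comb_fixed_fixed v :
  tau1 (comb_xyz v) = comb_xyz v -> tau2 (comb_xyz v) = comb_xyz v -> comb_xyz v = 0.
Proof.
case: v => [[a b] c]; rewrite tau1_comb tau2_comb => /comb_xyz_inj e1 /comb_xyz_inj e2.
by rewrite (tau_xyz_fixed_fixed two_neq0 tt_neq0 onem_tt_neq0 t'E t''E e1 e2) comb_xyz0.
Qed.

Lemma comb_fixed_neg v :
  tau1 (comb_xyz v) = comb_xyz v -> tau2 (comb_xyz v) = - comb_xyz v ->
  comb_xyz v = (v.2 * 4) *: u0 k.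
Proof.
case: v => [[a b] c] /=; rewrite tau1_comb tau2_comb -comb_xyzN.
move=> /comb_xyz_inj e1 /comb_xyz_inj e2.
by rewrite (tau_xyz_fixed_neg e1 e2) comb_xyzZ comb_u0 scalerA.
Qed.

Lemma comb_neg_fixed v :
  tau1 (comb_xyz v) = - comb_xyz v -> tau2 (comb_xyz v) = comb_xyz v ->
  comb_xyz v = (v.1.1 * 4) *: u1 k.
Proof.
case: v => [[a b] c] /=; rewrite tau1_comb tau2_comb -comb_xyzN.
move=> /comb_xyz_inj e1 /comb_xyz_inj e2.
by rewrite (tau_xyz_neg_fixed onem_tt_neq0 t''E e1 e2) comb_xyzZ comb_u1 scalerA.
Qed.

Lemma comb_neg_neg v :
  tau1 (comb_xyz v) = - comb_xyz v -> tau2 (comb_xyz v) = - comb_xyz v ->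
  comb_xyz v = (v.1.2 * 4) *: u2 k.
Proof.
case: v => [[a b] c] /=; rewrite tau1_comb tau2_comb -comb_xyzN.
move=> /comb_xyz_inj e1 /comb_xyz_inj e2.
by rewrite (tau_xyz_neg_neg tt_neq0 onem_tt_neq0 t'E t''E e1 e2) comb_xyzZ comb_u2 scalerA.
Qed.

Section JointEigenline.
Variables (f1 f2 : 'M[K]_2 -> 'M[K]_2) (u : 'M[K]_2) (phi : K * K * K -> K).
Hypotheses (f1Z : forall s g, f1 (s *: g) = s *: f1 g).
Hypotheses (f2Z : forall s g, f2 (s *: g) = s *: f2 g).
Hypotheses (tau1_u : tau1 u = f1 u) (tau2_u : tau2 u = f2 u) (in_g_u : in_g u).
Hypothesis inA_phi : forall a b c, inA a -> inA b -> inA c -> inA (phi (a, b, c)).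
Hypothesis comb_eigen : forall v,
  tau1 (comb_xyz v) = f1 (comb_xyz v) -> tau2 (comb_xyz v) = f2 (comb_xyz v) ->
  comb_xyz v = phi v *: u.

Lemma joint_eigenspaceE g :
  in_g g /\ tau1 g = f1 g /\ tau2 g = f2 g <-> exists a, inA a /\ g = a *: u.
Proof.
split=> [[gg [e1 e2]] | [a [aA ->]]]; last first.
  by split; [exact: in_gZ | rewrite tau1Z tau2Z tau1_u tau2_u f1Z f2Z].
have [coaA cobA cocA] := inA_coords gg; have gE := xyz_coordsK (proj2 gg).
exists (phi (xyz_coords g)); split; first exact: inA_phi.
by rewrite -{1}gE; apply: comb_eigen; rewrite gE.
Qed.

End JointEigenline.

Lemma eigenspace_fixed_fixed (g : 'M[K]_2) : in_g g /\ tau1 g = g /\ tau2 g = g <-> g = 0.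
Proof.
split=> [[[_ trg] [e1 e2]] | ->].
  by rewrite -(xyz_coordsK trg); apply: comb_fixed_fixed; rewrite xyz_coordsK.
have [gx _ _] := in_g_xyz.
rewrite -(scale0r (xm k)) tau1Z tau2Z; split; first exact: in_gZ inA0 gx.
by rewrite !scale0r.
Qed.

Lemma eigenspace_fixed_neg (g : 'M[K]_2) :
  in_g g /\ tau1 g = g /\ tau2 g = - g <-> exists a, inA a /\ g = a *: u0 k.
Proof.
have [tau1_u0 tau2_u0] := tau_u0.
exact: (joint_eigenspaceE (f1 := id) (f2 := -%R) (phi := fun v => v.2 * 4)
  (fun _ _ => erefl) (fun s h => esym (scalerN s h)) tau1_u0 tau2_u0 in_g_u0
  (fun _ _ _ _ _ cA => inA_mul cA (inA_nat 4)) comb_fixed_neg).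
Qed.

Lemma eigenspace_neg_fixed (g : 'M[K]_2) :
  in_g g /\ tau1 g = - g /\ tau2 g = g <-> exists a, inA a /\ g = a *: u1 k.
Proof.
have [tau1_u1 tau2_u1] := tau_u1.
exact: (joint_eigenspaceE (f1 := -%R) (f2 := id) (phi := fun v => v.1.1 * 4)
  (fun s h => esym (scalerN s h)) (fun _ _ => erefl) tau1_u1 tau2_u1 in_g_u1
  (fun _ _ _ aA _ _ => inA_mul aA (inA_nat 4)) comb_neg_fixed).
Qed.

Lemma eigenspace_neg_neg (g : 'M[K]_2) :
  in_g g /\ tau1 g = - g /\ tau2 g = - g <-> exists a, inA a /\ g = a *: u2 k.
Proof.
have [tau1_u2 tau2_u2] := tau_u2.
exact: (joint_eigenspaceE (f1 := -%R) (f2 := -%R) (phi := fun v => v.1.2 * 4)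
  (fun s h => esym (scalerN s h)) (fun s h => esym (scalerN s h)) tau1_u2 tau2_u2
  in_g_u2 (fun _ _ _ _ bA _ => inA_mul bA (inA_nat 4)) comb_neg_neg).
Qed.

End Tetrahedron.

Theorem theorem2p1 (k : fieldType) (hchar : (2%:R : k) != 0) :
  (forall g : 'M[Kt k]_2,
      in_g g /\ tau1 g = g /\ tau2 g = g <-> g = 0) /\
  (forall g : 'M[Kt k]_2,
      in_g g /\ tau1 g = g /\ tau2 g = - g <->
      exists a : Kt k, inA a /\ g = a *: u0 k) /\
  (forall g : 'M[Kt k]_2,
      in_g g /\ tau1 g = - g /\ tau2 g = g <->
      exists a : Kt k, inA a /\ g = a *: u1 k) /\
  (forall g : 'M[Kt k]_2,
      in_g g /\ tau1 g = - g /\ tau2 g = - g <->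
      exists a : Kt k, inA a /\ g = a *: u2 k).
Proof.
split; first exact: eigenspace_fixed_fixed.
split; first exact: eigenspace_fixed_neg.
split; first exact: eigenspace_neg_fixed.
exact: eigenspace_neg_neg.
Qed.
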